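(* Let $\alpha>0$, $\alpha\ne1$, let $U\in\mathcal{U}(d)$ and let $\Phi(Y)=UYU^\dagger$ be the corresponding unitary channel, with Choi state $\rho_\Phi=\frac1d\sum_{i,j=0}^{d-1}\Phi(|i\rangle\langle j|)\otimes|i\rangle\langle j|$ on $\mathbb{C}^d\otimes\mathbb{C}^d$. Then $H_\alpha(U)=\frac{1}{\alpha-1}\big(1-e^{-(\alpha-1)M_\alpha(\rho_\Phi)}\big)$.
   Context: Let $d_L\ge 2$, $n\ge1$, $d=d_L^n$, with computational basis $\{|i\rangle\}$ of $\mathbb{C}^d$. On $\mathbb{C}^{d_L}$ let $Z|k\rangle=\omega^k|k\rangle$, $X|k\rangle=|k+1\rangle$ (mod $d_L$), $\omega=e^{2\pi i/d_L}$, $\tau=-e^{i\pi/d_L}$, $D_{(a_1,a_2)}=\tau^{a_1a_2}X^{a_1}Z^{a_2}$, and for $\mathbf a=\mathbf a_1\oplus\cdots\oplus\mathbf a_n\in\mathbb{Z}_{d_L}^{2n}$ let $D_{\mathbf a}=D_{\mathbf a_1}\otimes\cdots\otimes D_{\mathbf a_n}$. The $\alpha$-Clifford entropy of $U$ is $H_\alpha(U)=\frac{1}{\alpha-1}\Big(1-\frac{1}{d^2}\sum_{\mathbf a,\mathbf b}\big|\tfrac1d\operatorname{tr}(D_{\mathbf a}^\dagger UD_{\mathbf b}U^\dagger)\big|^{2\alpha}\Big)$. For a pure state $\rho$ on $\mathbb{C}^d\otimes\mathbb{C}^d$, define $\chi_{\mathbf{ab}}(\rho)=\frac{1}{d^2}\big|\operatorname{tr}\big((D_{\mathbf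 a}^\dagger\otimes D_{\mathbf b}^\dagger)\rho\big)\big|^2$ (a probability distribution over $(\mathbf a,\mathbf b)$) and the (bipartite) stabilizer Rényi entropy $M_\alpha(\rho)=\frac{1}{1-\alpha}\ln\sum_{\mathbf a,\mathbf b}\chi_{\mathbf{ab}}(\rho)^\alpha-\ln(d^2)$. *)

From HB Require Import structures.
From mathcomp Require Import all_boot all_order all_algebra.
From mathcomp Require Import complex mxtens.
From mathcomp Require Import reals sequences exp trigo.
Set Implicit Arguments.
Unset Strict Implicit.
Unset Printing Implicit Defensive.
Import Order.TTheory GRing.Theory Num.Theory.
Local Open Scope ring_scope.

Section CliffordDefs.
Variable R : realType.
Local Notation C := (R[i]).

Definition cexpi (t : R) : C := Complex (cos t) (sin t).

Definition omega (dL : nat) : C := cexpi (2 * pi / dL%:R).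
Definition tau (dL : nat) : C := - cexpi (pi / dL%:R).

Definition shiftX (dL : nat) : 'M[C]_dL :=
  \matrix_(i, j) ((nat_of_ord i == (j.+1 %% dL)%N)%:R).
Definition clockZ (dL : nat) : 'M[C]_dL :=
  \matrix_(i, j) ((i == j)%:R * omega dL ^+ j).

Fixpoint mxpow (m : nat) (A : 'M[C]_m) (k : nat) : 'M[C]_m :=
  match k with 0 => 1%:M | k'.+1 => A *m mxpow A k' end.

Definition weyl1 (dL : nat) (a : 'I_dL * 'I_dL) : 'M[C]_dL :=
  tau dL ^+ (a.1 * a.2) *: (mxpow (shiftX dL) a.1 *m mxpow (clockZ dL) a.2).

Fixpoint weyl_seq (dL : nat) (s : seq ('I_dL * 'I_dL)) : 'M[C]_(dL ^ size s) :=
  match s return 'M[C]_(dL ^ size s) with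
  | [::] => castmx (esym (expn0 dL), esym (expn0 dL)) 1%:M
  | x :: s' => castmx (esym (expnS dL (size s')), esym (expnS dL (size s')))
                      (weyl1 x *t weyl_seq s')
  end.

(* D_a for a = a_1 (+) ... (+) a_n in Z_dL^{2n}, a_k = (a_{k,1}, a_{k,2}) *)
Definition weyl (dL n : nat) (a : n.-tuple ('I_dL * 'I_dL)) : 'M[C]_(dL ^ n) :=
  castmx (congr1 (expn dL) (size_tuple a), congr1 (expn dL) (size_tuple a))
         (weyl_seq (tval a)).

Definition cabs (z : C) : R := @complex.Re R `|z|.

Definition adjmx (m p : nat) (A : 'M[C]_(m, p)) : 'M[C]_(p, m) :=
  (map_mx (fun z => z^*) A)^T.

Definition unitary (m : nat) (U : 'M[C]_m) := U *m adjmx U = 1%:M.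

Definition clifford_entropy (dL n : nat) (alpha : R) (U : 'M[C]_(dL ^ n)) : R :=
  let d := (dL ^ n)%N in
  (alpha - 1)^-1 *
  (1 - (d%:R ^+ 2)^-1 *
       \sum_(a : n.-tuple ('I_dL * 'I_dL)) \sum_(b : n.-tuple ('I_dL * 'I_dL))
          powR (cabs ((d%:R)^-1 *
                 \tr (adjmx (weyl a) *m U *m weyl b *m adjmx U))) (2 * alpha)).

Definition chi (dL n : nat) (rho : 'M[C]_(dL ^ n * dL ^ n))
    (a b : n.-tuple ('I_dL * 'I_dL)) : R :=
  ((dL ^ n)%:R ^+ 2)^-1 *
  cabs (\tr ((adjmx (weyl a) *t adjmx (weyl b)) *m rho)) ^+ 2.

Definition stab_renyi (dL n : nat) (alpha : R) (rho : 'M[C]_(dL ^ n * dL ^ n)) : R :=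
  (1 - alpha)^-1 *
    ln (\sum_(a : n.-tuple ('I_dL * 'I_dL)) \sum_(b : n.-tuple ('I_dL * 'I_dL))
          powR (chi rho a b) alpha)
  - ln (((dL ^ n)%:R : R) ^+ 2).

Definition choi (m : nat) (U : 'M[C]_m) : 'M[C]_(m * m) :=
  (m%:R)^-1 *: \sum_(i < m) \sum_(j < m)
     ((U *m delta_mx i j *m adjmx U) *t delta_mx i j).

End CliffordDefs.

(* The Choi state converts Weyl expectation values into Clifford coefficients:
   tr((D_a^+ (x) D_b^+) rho_U) = d^-1 tr(D_a^+ U conj(D_b) U^+), and conj(D_b) is
   a unit-modulus multiple of D_b' with b' = (b_1, -b_2) componentwise, a
   bijection of the index set.  Hence chi_ab(rho_U) = d^-2 |d^-1 tr(D_a^+ U D_b' U^+)|^2,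
   so sum chi^alpha = d^(-2 alpha) S with S the double sum in H_alpha(U), and
   -(alpha - 1) M_alpha(rho_U) = ln (S / d^2).  This needs S > 0, which holds
   since S >= 1: by unitarity the term a = b = 0 equals 1. *)

From HB Require Import structures.
From mathcomp Require Import all_boot all_order all_algebra.
From mathcomp Require Import complex mxtens.
From mathcomp Require Import reals sequences exp trigo.
From mathcomp Require Import ring.
Import Order.TTheory GRing.Theory Num.Theory.
Local Open Scope ring_scope.

Set Implicit Arguments.
Unset Strict Implicit.
Unset Printing Implicit Defensive.

Section ComplexMatrices.
Variable R : realType.
Local Notation C := (R[i]).

Lemma cabs_ge0 (z : C) : 0 <= cabs z.
Proof. by have := normr_ge0 z; rewrite lecE => /andP[]. Qed.

Lemma cabs1 : cabs (1 : C) = 1.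
Proof. by rewrite /cabs normr1. Qed.

Lemma cabsMl_norm1 (c z : C) : `|c| = 1 -> cabs (c * z) = cabs z.
Proof. by move=> c1; rewrite /cabs normrM c1 mul1r. Qed.

Lemma conjC_expr_unity_root (w : C) (p a : nat) :
  `|w| = 1 -> w ^+ p = 1 -> (a <= p)%N -> (w ^+ a)^* = w ^+ (p - a).
Proof.
move=> w1 wp1 ap.
have wU : w \is a GRing.unit by rewrite unitfE -normr_eq0 w1 oner_eq0.
by rewrite exprB // wp1 mul1r invC_norm normrX w1 !expr1n invr1 mul1r.
Qed.

Lemma castmx1 m m' (e1 e2 : m = m') : castmx (e1, e2) (1%:M : 'M[C]_m) = 1%:M.
Proof. by case: m' / e1 e2 => e2; rewrite (eq_irrelevance e2 erefl) castmx_id. Qed.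

Lemma tensmx11 m p : (1%:M : 'M[C]_m) *t (1%:M : 'M[C]_p) = 1%:M.
Proof.
apply/matrixP => i j.
case: (mxtens_indexP i) => i1 i2; case: (mxtens_indexP j) => j1 j2.
rewrite tensmxE !mxE (inj_eq (can_inj (@mxtens_indexK m p))) xpair_eqE.
by rewrite -natrM mulnb.
Qed.

Lemma tensmxZZ m n p q a b (A : 'M[C]_(m, n)) (B : 'M[C]_(p, q)) :
  (a *: A) *t (b *: B) = (a * b) *: (A *t B).
Proof. by apply/matrixP => i j; rewrite !mxE mulrACA. Qed.

Lemma tensmx_castr m p q (e : p = q) (A : 'M[C]_m) (B : 'M[C]_p) :
  A *t castmx (e, e) B = castmx (congr1 (muln m) e, congr1 (muln m) e) (A *t B).
Proof. by case: q / e; rewrite !castmx_id. Qed.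

Lemma castmxZ m n m' n' (e : (m = m') * (n = n')) a (A : 'M[C]_(m, n)) :
  castmx e (a *: A) = a *: castmx e A.
Proof. by apply/matrixP => i j; rewrite castmxE !mxE castmxE. Qed.

Lemma mxtrace_tens m p (A : 'M[C]_m) (B : 'M[C]_p) : \tr (A *t B) = \tr A * \tr B.
Proof. by rewrite /mxtrace mulr_sum; apply: eq_bigr => k _; rewrite mxE. Qed.

Lemma mxtrace_mul_delta m (M : 'M[C]_m) i j : \tr (M *m delta_mx i j) = M j i.
Proof.
rewrite /mxtrace (bigD1 j) //= big1 => [|k nkj]; last first.
  by rewrite mxE big1 // => l _; rewrite mxE (negbTE nkj) andbF mulr0.
rewrite mxE (bigD1 i) //= big1 => [|l nli]; first by rewrite !mxE !eqxx mulr1 !addr0.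
by rewrite mxE (negbTE nli) mulr0.
Qed.

Lemma mxtrace_tens_choi m (A B U : 'M[C]_m) :
  \tr ((A *t B) *m choi U) = m%:R^-1 * \tr (A *m U *m B^T *m adjmx U).
Proof.
rewrite /choi -scalemxAr mxtraceZ; congr (_ * _).
rewrite mulmx_sumr raddf_sum /=.
under eq_bigr => i _ do rewrite mulmx_sumr raddf_sum /=.
under eq_bigr => i _ do under eq_bigr => j _ do
  rewrite tensmx_mul mxtrace_tens !mulmxA mxtrace_mulC !mulmxA !mxtrace_mul_delta.
rewrite mxtrace_mulC !mulmxA /mxtrace exchange_big /=.
by apply: eq_bigr => j _; rewrite mxE; apply: eq_bigr => i _; rewrite !mxE.
Qed.

Lemma map_mxpow (f : {rmorphism C -> C}) m (A : 'M[C]_m) k :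
  map_mx f (mxpow A k) = mxpow (map_mx f A) k.
Proof. by elim: k => [|k IH] /=; rewrite ?map_mx1 // map_mxM IH. Qed.

Lemma mxpow_diag m (f : 'I_m -> C) k :
  mxpow (\matrix_(i, j) ((i == j)%:R * f j)) k =
  \matrix_(i, j) ((i == j)%:R * f j ^+ k).
Proof.
elim: k => [|k IH] /=; first by apply/matrixP => i j; rewrite !mxE mulr1.
rewrite IH; apply/matrixP => i j; rewrite !mxE (bigD1 i) //= big1 => [|l nil].
  rewrite !mxE eqxx addr0 !mul1r.
  by case: eqP => [->|]; rewrite ?exprS ?mul0r ?mulr0 ?mul1r.
by rewrite !mxE [i == l]eq_sym (negbTE nil) !mul0r.
Qed.

End ComplexMatrices.

Section WeylConjugation.
Variables (R : realType) (dL : nat).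
Local Notation C := (R[i]).
Local Notation conjmx := (map_mx (@Num.conj C)).

Lemma norm_cexpi (t : R) : `|cexpi t| = 1.
Proof. by rewrite normc_def /= cos2Dsin2 sqrtr1. Qed.

Lemma cexpiD (s t : R) : cexpi s * cexpi t = cexpi (s + t).
Proof.
by apply/eqP; rewrite /cexpi cosD sinD eq_complex /= [sin s * _ + _]addrC !eqxx.
Qed.

Lemma cexpiMn (t : R) k : cexpi t ^+ k = cexpi (t *+ k).
Proof.
elim: k => [|k IH]; first by rewrite /cexpi cos0 sin0.
by rewrite exprS IH cexpiD mulrS.
Qed.

Lemma norm_omega : `|omega R dL| = 1.
Proof. exact: norm_cexpi. Qed.

Lemma norm_tau : `|tau R dL| = 1.
Proof. by rewrite normrN norm_cexpi. Qed.

Lemma omega_expr_order : omega R dL ^+ dL = 1.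
Proof.
case: dL => [|k]; first by [].
rewrite /omega cexpiMn -[X in cexpi X]mulr_natr divfK ?pnatr_eq0 //.
by rewrite mulr_natl /cexpi sin2pi -[pi *+ 2]add0r cosD2pi cos0.
Qed.

Definition ord_opp (a : 'I_dL) : 'I_dL :=
  Ordinal (ltn_pmod (dL - a) (leq_ltn_trans (leq0n a) (ltn_ord a))).

Lemma ord_oppK : involutive ord_opp.
Proof.
move=> a; apply: val_inj => /=.
have dL0 : (0 < dL)%N := leq_ltn_trans (leq0n a) (ltn_ord a).
have [->|a0] := posnP a; first by rewrite subn0 modnn subn0 modnn.
rewrite (@modn_small (dL - a)) ?ltn_subrL ?a0 ?dL0 //.
by rewrite subKn ?modn_small // ltnW.
Qed.

Definition conj_index (x : 'I_dL * 'I_dL) := (x.1, ord_opp x.2).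

Lemma conj_indexK : involutive conj_index.
Proof. by case=> a b; rewrite /conj_index /= ord_oppK. Qed.

Lemma conjmx_shiftX : conjmx (shiftX R dL) = shiftX R dL.
Proof. by apply/matrixP => i j; rewrite !mxE conjC_nat. Qed.

Lemma conjmx_clockZX (a : 'I_dL) :
  conjmx (mxpow (clockZ R dL) a) = mxpow (clockZ R dL) (ord_opp a).
Proof.
rewrite /clockZ !mxpow_diag; apply/matrixP => i j.
rewrite !mxE rmorphM rmorph_nat; congr (_ * _).
have wdL : (omega R dL ^+ j) ^+ dL = 1.
  by rewrite -exprM mulnC exprM omega_expr_order expr1n.
rewrite /= expr_mod // (conjC_expr_unity_root _ wdL) ?normrX ?norm_omega //.
  exact: expr1n.
exact: ltnW.
Qed.

Lemma conjmx_weyl1 x :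
  exists2 c : C, `|c| = 1 & conjmx (weyl1 R x) = c *: weyl1 R (conj_index x).
Proof.
case: x => a1 a2.
have tau0 : tau R dL != 0 by rewrite -normr_eq0 norm_tau oner_eq0.
exists ((tau R dL ^+ (a1 * a2))^* / tau R dL ^+ (a1 * ord_opp a2)).
  by rewrite normrM normfV norm_conjC !normrX norm_tau !expr1n invr1 mulr1.
rewrite /weyl1 /= map_mxZ map_mxM !map_mxpow conjmx_shiftX -map_mxpow.
by rewrite conjmx_clockZX scalerA divfK // expf_neq0.
Qed.

Lemma conjmx_weyl_seq (s : seq ('I_dL * 'I_dL)) :
  let e := congr1 (expn dL) (size_map conj_index s) in
  exists2 c : C, `|c| = 1 &
    conjmx (weyl_seq R s) = c *: castmx (e, e) (weyl_seq R (map conj_index s)).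
Proof.
elim: s => [|x s [c c1 IH]] /=.
  by exists 1; rewrite ?normr1 // scale1r map_castmx map_mx1 !castmx1.
have [c' c'1 Ex] := conjmx_weyl1 x.
exists (c' * c); first by rewrite normrM c'1 c1 mulr1.
rewrite map_castmx map_mxT Ex IH tensmxZZ tensmx_castr !castmxZ !castmx_comp.
by congr (_ *: _); apply: eq_castmx.
Qed.

Definition conj_tuple n (b : n.-tuple ('I_dL * 'I_dL)) := map_tuple conj_index b.

Lemma conj_tupleK n : involutive (@conj_tuple n).
Proof.
by move=> b; apply: val_inj; rewrite /= -map_comp (eq_map conj_indexK) map_id.
Qed.

Lemma conjmx_weyl n (b : n.-tuple ('I_dL * 'I_dL)) :
  exists2 c : C, `|c| = 1 & conjmx (weyl R b) = c *: weyl R (conj_tuple b).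
Proof.
have [c c1 E] := conjmx_weyl_seq b.
exists c => //; rewrite /weyl map_castmx E castmxZ castmx_comp.
by congr (_ *: _); apply: eq_castmx.
Qed.

End WeylConjugation.

Section IdentityWeyl.
Variables (R : realType) (dL : nat).
Hypothesis dL_gt0 : (0 < dL)%N.
Let o : 'I_dL := Ordinal dL_gt0.

Lemma weyl1_00 : weyl1 R (o, o) = 1%:M.
Proof. by rewrite /weyl1 expr0 scale1r mul1mx. Qed.

Lemma weyl_seq_nseq00 k : weyl_seq R (nseq k (o, o)) = 1%:M.
Proof. by elim: k => [|k IH] /=; rewrite ?weyl1_00 ?IH ?tensmx11 castmx1. Qed.

Lemma weyl00 n : weyl R (nseq_tuple n (o, o)) = 1%:M.
Proof. by rewrite /weyl weyl_seq_nseq00 castmx1. Qed.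

End IdentityWeyl.

Lemma expR_scaled_renyi (R : realType) (alpha D S : R) :
  alpha != 1 -> 0 < D -> 0 < S ->
  expR (- (alpha - 1) * ((1 - alpha)^-1 * ln (powR D^-1 alpha * S) - ln D)) =
  D^-1 * S.
Proof.
move=> alpha1 D0 S0.
have alpha1' : 1 - alpha != 0 by rewrite subr_eq0 eq_sym.
rewrite lnM ?posrE ?powR_gt0 ?invr_gt0 // ln_powR lnV ?posrE //.
have -> : - (alpha - 1) * ((1 - alpha)^-1 * (alpha * - ln D + ln S) - ln D) =
          ln S - ln D.
  by rewrite opprB mulrBr mulrA mulfV // mul1r; ring.
by rewrite expRD expRN !lnK ?posrE // mulrC.
Qed.

Section StabilizerEntropy.
Variables (R : realType) (dL n : nat) (U : 'M[R[i]]_(dL ^ n)).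
Local Notation d := (dL ^ n)%N.
Local Notation idx := (n.-tuple ('I_dL * 'I_dL)).

Definition weyl_overlap (a b : idx) : R :=
  cabs (d%:R^-1 * \tr (adjmx (weyl R a) *m U *m weyl R b *m adjmx U)).

Lemma weyl_overlap_ge0 (a b : idx) : 0 <= weyl_overlap a b.
Proof. exact: cabs_ge0. Qed.

Lemma clifford_entropyE alpha :
  clifford_entropy alpha U =
  (alpha - 1)^-1 * (1 - (d%:R ^+ 2)^-1 *
     \sum_(a : idx) \sum_(b : idx) powR (weyl_overlap a b) (2 * alpha)).
Proof. by []. Qed.

Lemma chi_choi (a b : idx) :
  chi (choi U) a b = (d%:R ^+ 2)^-1 * weyl_overlap a (conj_tuple b) ^+ 2.
Proof.
rewrite /chi mxtrace_tens_choi trmxK.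
have [c c1 ->] := conjmx_weyl R b.
by rewrite -scalemxAr -scalemxAl mxtraceZ (mulrCA _ c) cabsMl_norm1.
Qed.

Lemma sum_powR_chi_choi alpha :
  \sum_(a : idx) \sum_(b : idx) powR (chi (choi U) a b) alpha =
  powR (d%:R ^+ 2)^-1 alpha *
    \sum_(a : idx) \sum_(b : idx) powR (weyl_overlap a b) (2 * alpha).
Proof.
rewrite mulr_sumr; apply: eq_bigr => a _.
rewrite mulr_sumr [RHS](reindex_inj (inv_inj (@conj_tupleK dL n))).
apply: eq_bigr => b _.
rewrite chi_choi powRM ?invr_ge0 ?exprn_ge0 ?ler0n ?weyl_overlap_ge0 //.
by rewrite -(powR_mulrn 2 (weyl_overlap_ge0 _ _)) -powRrM.
Qed.

Lemma weyl_overlap00 (dL_gt0 : (0 < dL)%N) :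
  unitary U ->
  weyl_overlap (nseq_tuple n (Ordinal dL_gt0, Ordinal dL_gt0))
               (nseq_tuple n (Ordinal dL_gt0, Ordinal dL_gt0)) = 1.
Proof.
move=> UU; rewrite /weyl_overlap weyl00 /adjmx map_mx1 trmx1 mul1mx mulmx1.
by rewrite -/(adjmx U) UU mxtrace1 mulVf ?pnatr_eq0 -?lt0n ?expn_gt0 ?dL_gt0 ?cabs1.
Qed.

Lemma sum_powR_weyl_overlap_ge1 r :
  (0 < dL)%N -> unitary U ->
  1 <= \sum_(a : idx) \sum_(b : idx) powR (weyl_overlap a b) r.
Proof.
move=> dL_gt0 UU; pose z := nseq_tuple n (Ordinal dL_gt0, Ordinal dL_gt0).
have overlap_powR_ge0 a b : 0 <= powR (weyl_overlap a b) r by apply: powR_ge0.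
have row_ge1 : 1 <= \sum_(b : idx) powR (weyl_overlap z b) r.
  by rewrite (bigD1 z) //= weyl_overlap00 // powR1 lerDl sumr_ge0.
apply: le_trans row_ge1 _.
by rewrite [leRHS](bigD1 z) //= lerDl sumr_ge0 // => a _; rewrite sumr_ge0.
Qed.

End StabilizerEntropy.

Theorem theorem4 (R : realType) (dL n : nat) (alpha : R)
    (U : 'M[R[i]]_(dL ^ n)) :
  (2 <= dL)%N -> (1 <= n)%N ->
  0 < alpha -> alpha != 1 ->
  unitary U ->
  clifford_entropy alpha U =
    (alpha - 1)^-1 * (1 - expR (- (alpha - 1) * stab_renyi alpha (choi U))).
Proof.
move=> dL_ge2 _ _ alpha1 UU.
have dL_gt0 : (0 < dL)%N by apply: leq_trans dL_ge2.
have S_ge1 := sum_powR_weyl_overlap_ge1 (2 * alpha) dL_gt0 UU.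
rewrite clifford_entropyE /stab_renyi sum_powR_chi_choi expR_scaled_renyi //.
  by rewrite exprn_gt0 // ltr0n expn_gt0 dL_gt0.
exact: lt_le_trans S_ge1.
Qed.
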